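(* Let $H$ be a finite, connected, simple planar map with at least $3$ vertices. Let $LD(H)$ be the number of vertices of $H$ of degree at most $5$, and let $ME(H)=\sum_f(\deg[f]-3)$, the sum over all faces $f$ of $H$ including the external face. Then $LD(H)\ge\frac25 ME(H)+\frac{12}{5}$.
   Context: A planar map is a planar graph together with an embedding in the plane. $\deg[f]$ is the degree (length of the boundary walk) of the face $f$. $ME(H)$ equals the number of edges that can be added to $H$ while keeping it a simple planar map. *)

From mathcomp Require Import all_boot all_order all_algebra all_fingroup.
Set Implicit Arguments. Unset Strict Implicit. Unset Printing Implicit Defensive.
Import GRing.Theory Num.Theory.

(* A combinatorial map on a finite set of darts D is given by
   - sigma : the vertex rotation (cyclic order of darts around each vertex),
   - alpha : the edge involution (fixed-point free), pairing the two darts of an edge.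
   Vertices = sigma-orbits, edges = alpha-orbits,
   faces = orbits of the face permutation phi = sigma o alpha. *)

Section Maps.
Variable D : finType.
Variables (sigma alpha : {perm D}).

Definition phi (x : D) : D := sigma (alpha x).

Definition nV : nat := #|[pred x | froots sigma x]|.
Definition nE : nat := #|[pred x | froots alpha x]|.
Definition nF : nat := #|[pred x | froots phi x]|.

Definition edge_involution : Prop :=
  forall x, alpha (alpha x) = x /\ alpha x != x.

Definition map_connected : Prop :=
  forall x y, connect [rel u v | (v == sigma u) || (v == alpha u)] x y.

(* genus 0 (Euler's formula) : the map is planar *)
Definition map_planar : Prop := (nV + nF = nE + 2)%N.

(* simple: no loops and no multiple edges *)
Definition map_simple : Prop :=
  (forall x, ~~ fconnect sigma x (alpha x)) /\
  (forall x y, x != y -> fconnect sigma x y ->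
     ~~ fconnect sigma (alpha x) (alpha y)).

Definition vdeg (x : D) : nat := fingraph.order sigma x.
Definition fdeg (x : D) : nat := fingraph.order phi x.

Definition LD : nat := #|[pred x | froots sigma x && (vdeg x <= 5)%N]|.

Definition ME : int := (\sum_(x | froots phi x) ((fdeg x)%:Z - 3))%R.
End Maps.

From mathcomp Require Import all_boot all_order all_algebra all_fingroup.
From mathcomp Require Import zify.
Set Implicit Arguments. Unset Strict Implicit. Unset Printing Implicit Defensive.
Import GRing.Theory Num.Theory.

(* Counting darts: the vertex degrees and the face degrees both sum to the
   number of darts 2E, so ME = 2E - 3F, and Euler's formula V + F = E + 2 turns
   2 ME + 12 into 6V - 2E = sum_v (6 - deg v).  Every term of this sum is at most
   5 (degrees are positive) and is nonpositive unless deg v <= 5, hence it is at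
   most 5 LD. *)

Section OrbitCounting.
Variable D : finType.

Lemma sum_order_roots (f : D -> D) : injective f ->
  (\sum_(x | froots f x) fingraph.order f x = #|D|)%N.
Proof.
move=> injf; have symf : connect_sym (frel f) by apply: fconnect_sym.
symmetry; rewrite -sum1_card (partition_big (froot f) (froots f)) /=; last first.
  by move=> x _; apply: roots_root.
apply: eq_bigr => r /eqP rootr; rewrite sum1dep_card; apply: eq_card => y.
by rewrite inE -{1}rootr root_connect // symf.
Qed.

Lemma order_edge_involution (alpha : {perm D}) x :
  edge_involution alpha -> fingraph.order alpha x = 2%N.
Proof.
move=> inv; have [aax ax] := inv x.
have -> : 2%N = #|pred2 x (alpha x)| by rewrite card2 eq_sym ax.
apply: eq_card => y; rewrite !inE; apply/idP/orP; last first.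
  by case=> /eqP ->; [exact: connect0 | exact: fconnect1].
have closed2 : closed (frel alpha) (pred2 x (alpha x)).
  move=> u v /eqP <-; rewrite !inE; apply/orP/orP.
    by case=> /eqP ->; rewrite ?aax eqxx; [right | left].
  case=> /eqP h; last by rewrite (perm_inj h) eqxx; left.
  by rewrite -(perm_inj (etrans h (esym aax))) eqxx; right.
move=> cxy; apply/orP.
by have := closed_connect closed2 cxy; rewrite !inE eqxx => <-.
Qed.

End OrbitCounting.

Section DartCounting.
Variable D : finType.
Variables (sigma alpha : {perm D}).

Lemma phi_inj : injective (phi sigma alpha).
Proof. by move=> x y /perm_inj /perm_inj. Qed.

Lemma double_nE : edge_involution alpha -> (2 * nE alpha = #|D|)%N.
Proof.
move=> inv; rewrite -(sum_order_roots (perm_inj (s:=alpha))) /nE -sum1_card.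
by rewrite big_distrr /=; apply: eq_big => // x _; rewrite order_edge_involution.
Qed.

Lemma ME_card_darts : ME sigma alpha = (#|D|%:Z - 3 * (nF sigma alpha)%:Z)%R.
Proof.
rewrite /ME sumrB -(sum_order_roots phi_inj) /nF -sum1_card.
rewrite -!natz !natr_sum mulr_sumr; congr (_ - _)%R.
by apply: eq_bigr => x _; rewrite natz.
Qed.

Lemma leq_6nV_darts_LD : (6 * nV sigma <= #|D| + 5 * LD sigma)%N.
Proof.
have -> : LD sigma = (\sum_(x | froots sigma x) (vdeg sigma x <= 5))%N.
  by rewrite /LD -sum1_card big_mkcondr /=; apply: eq_bigr => x _; case: ifP.
rewrite -(sum_order_roots (perm_inj (s:=sigma))) /nV -sum1_card.
rewrite !big_distrr -big_split /=; apply: leq_sum => x _.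
by have := fingraph.order_gt0 sigma x; rewrite /vdeg; case: leqP => /= ? ?; lia.
Qed.

End DartCounting.

Theorem lemma17 (D : finType) (sigma alpha : {perm D}) :
  edge_involution alpha ->
  map_connected sigma alpha ->
  map_planar sigma alpha ->
  map_simple sigma alpha ->
  (3 <= nV sigma)%N ->
  (5 * (LD sigma)%:Z >= 2 * ME sigma alpha + 12)%R.
Proof.
move=> inv _ euler _ _; rewrite ME_card_darts.
move: euler (double_nE inv) (leq_6nV_darts_LD sigma); rewrite /map_planar.
move: (nV sigma) (nF sigma alpha) (nE alpha) (LD sigma) #|D| => V F E L d.
lia.
Qed.
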